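(* Let $(X,f)$ be a dynamical system and let $\mathcal{F}\subset\mathcal{F}_{inf}$ be a proper translation $+$ invariant Furstenberg family. Then $(X,f)$ is $\mathcal{F}$-transitive if and only if $(X,f)$ is $\nabla(\mathcal{F})$-point transitive.
   Context: A dynamical system is a pair $(X,f)$ with $X$ a compact metric space and $f:X\to X$ continuous. $\mathbb{N}=\{1,2,\dots\}$, $\mathbb{Z}_+=\{0,1,2,\dots\}$. For $U,V\subset X$ and $x\in X$: $N(U,V)=\{n\in\mathbb{N}: U\cap f^{-n}(V)\neq\emptyset\}$ and $N(x,U)=\{n\in\mathbb{N}: f^n(x)\in U\}$. A Furstenberg family is a collection $\mathcal{F}$ of subsets of $\mathbb{N}$ such that $F_1\subset F_2$ and $F_1\in\mathcal{F}$ imply $F_2\in\mathcal{F}$; it is proper if it is neither empty nor the collection of all subsets of $\mathbb{N}$; it is translation $+$ invariant if $F+n\in\mathcal{F}$ for all $F\in\mathcal{F}$ and $n\in\mathbb{Z}_+$, where $F+n=\{k+n:k\in F\}$. $\mathcal{F}_{inf}$ is the family of all infinite subsets of $\mathbb{N}$. $(X,f)$ is $\mathcal{F}$-transitive if $N(U,V)\in\mathcal{F}$ for all non-empty open $U,V\subset X$. A point $x$ is an $\mathcal{F}$-transitive point if $N(x,U)\in\mathcal{F}$ for every non-empty open $U$; $(X,f)$ is $\mathcal{F}$-point transitive if such a point exists. For $F\subset\mathbb{N}$, $F-F=\{a-b: a,b\in F,\ a>b\}$, and $\nabla(\mathcal{F})=\{F\subset\mathbb{N}: F-F\in\mathcal{F}\}$.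 *)

From Stdlib Require Import Reals List Arith.
Open Scope R_scope.

Section Defs.
Context {X : Type} (d : X -> X -> R).

Definition is_metric : Prop :=
  (forall x y, 0 <= d x y) /\
  (forall x y, d x y = 0 <-> x = y) /\
  (forall x y, d x y = d y x) /\
  (forall x y z, d x z <= d x y + d y z).

Definition open_set (U : X -> Prop) : Prop :=
  forall x, U x -> exists eps, 0 < eps /\ forall y, d x y < eps -> U y.

Definition compact_space : Prop :=
  forall (I : Type) (G : I -> X -> Prop),
    (forall i, open_set (G i)) -> (forall x, exists i, G i x) ->
    exists l : list I, forall x, exists i, In i l /\ G i x.

Definition continuous_map (f : X -> X) : Prop :=
  forall x eps, 0 < eps -> exists delta, 0 < delta /\
    forall y, d x y < delta -> d (f x) (f y) < eps.

Definition nonempty (U : X -> Prop) : Prop := exists x, U x.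
End Defs.

Open Scope nat_scope.

(* Subsets of N = {1,2,...} are predicates on nat not containing 0. *)
Definition subN (A : nat -> Prop) : Prop := ~ A 0.

Definition furstenberg_family (Fam : (nat -> Prop) -> Prop) : Prop :=
  (forall A, Fam A -> subN A) /\
  (forall A B, Fam A -> subN B -> (forall n, A n -> B n) -> Fam B).

Definition proper_family (Fam : (nat -> Prop) -> Prop) : Prop :=
  (exists A, Fam A) /\ (exists A, subN A /\ ~ Fam A).

Definition shift (A : nat -> Prop) (n : nat) : nat -> Prop :=
  fun k => exists a, A a /\ k = a + n.

Definition translation_invariant (Fam : (nat -> Prop) -> Prop) : Prop :=
  forall A n, Fam A -> Fam (shift A n).

Definition infinite_set (A : nat -> Prop) : Prop :=
  forall m, exists n, m <= n /\ A n.

Definition sub_Finf (Fam : (nat -> Prop) -> Prop) : Prop :=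
  forall A, Fam A -> infinite_set A.

Definition hit_UV {X : Type} (f : X -> X) (U V : X -> Prop) : nat -> Prop :=
  fun n => 1 <= n /\ exists x, U x /\ V (Nat.iter n f x).

Definition hit_xU {X : Type} (f : X -> X) (x : X) (U : X -> Prop) : nat -> Prop :=
  fun n => 1 <= n /\ U (Nat.iter n f x).

Definition diffset (A : nat -> Prop) : nat -> Prop :=
  fun n => exists a b, A a /\ A b /\ b < a /\ n = a - b.

Definition nabla (Fam : (nat -> Prop) -> Prop) : (nat -> Prop) -> Prop :=
  fun A => subN A /\ Fam (diffset A).

Definition F_transitive {X : Type} (d : X -> X -> R) (f : X -> X)
  (Fam : (nat -> Prop) -> Prop) : Prop :=
  forall U V, open_set d U -> open_set d V -> nonempty U -> nonempty V ->
    Fam (hit_UV f U V).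

Definition F_transitive_point {X : Type} (d : X -> X -> R) (f : X -> X)
  (Fam : (nat -> Prop) -> Prop) (x : X) : Prop :=
  forall U, open_set d U -> nonempty U -> Fam (hit_xU f x U).

Definition F_point_transitive {X : Type} (d : X -> X -> R) (f : X -> X)
  (Fam : (nat -> Prop) -> Prop) : Prop :=
  exists x, F_transitive_point d f Fam x.

(* (=>) Fam-transitivity makes every N(U,V) nonempty, i.e. f is topologically
   transitive.  On a compact metric space this yields a transitive point x: we
   build a nested sequence of closed balls, the (j+1)-st of which is sent into
   the j-th ball of a countable ball base at some positive time, and take a
   point of their intersection.  For such an x, every k ∈ N(U,U) is a
   difference of two visit times of x to U (x visits U ∩ f^-k U), so
   N(U,U) ⊆ N(x,U) - N(x,U), and upward closure gives the claim.
   (<=) Given U, V pick visit times a < a' of x to U and V and set k = a' - a;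
   then W = U ∩ f^-k V is a nonempty open set and
   (N(x,W) - N(x,W)) + k ⊆ N(U,V), so translation invariance and upward
   closure give N(U,V) ∈ Fam. *)

From Stdlib Require Import Reals List Arith Lra Lia Classical ClassicalEpsilon Cantor.

Definition ball {X : Type} (d : X -> X -> R) (c : X) (r : R) : X -> Prop :=
  fun y => (d c y < r)%R.

Definition closed_ball {X : Type} (d : X -> X -> R) (c : X) (r : R) : X -> Prop :=
  fun y => (d c y <= r)%R.

Definition topologically_transitive {X : Type} (d : X -> X -> R) (f : X -> X) : Prop :=
  forall U V, open_set d U -> open_set d V -> nonempty U -> nonempty V ->
    exists n, hit_UV f U V n.

Definition transitive_point {X : Type} (d : X -> X -> R) (f : X -> X) (x : X) : Prop :=
  forall U, open_set d U -> nonempty U -> exists n, hit_xU f x U n.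

Lemma dependent_choice_seq {A : Type} (P : A -> Prop) (Step : nat -> A -> A -> Prop)
  (a0 : A) :
  P a0 -> (forall j a, P a -> exists b, P b /\ Step j a b) ->
  exists s : nat -> A, forall j, P (s j) /\ Step j (s j) (s (S j)).
Proof.
  intros H0 Hstep.
  assert (Htot : forall ja : nat * A, exists b,
            P (snd ja) -> P b /\ Step (fst ja) (snd ja) b).
  { intros [j a]. destruct (classic (P a)) as [Ha|Ha].
    - destruct (Hstep j a Ha) as [b Hb]. exists b. auto.
    - exists a. simpl. tauto. }
  destruct (choice _ Htot) as [g Hg].
  pose (s := fix s (j : nat) : A := match j with O => a0 | S j => g (j, s j) end).
  assert (HP : forall j, P (s j)).
  { induction j as [|j IH]; [exact H0|]. apply (Hg (j, s j) IH). }
  exists s. intro j. split; [apply HP|]. apply (Hg (j, s j) (HP j)).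
Qed.

Lemma inter_open {X : Type} (d : X -> X -> R) (U V : X -> Prop) :
  open_set d U -> open_set d V -> open_set d (fun y => U y /\ V y).
Proof.
  intros HU HV x [HxU HxV].
  destruct (HU x HxU) as [e1 [He1 HB1]]. destruct (HV x HxV) as [e2 [He2 HB2]].
  exists (Rmin e1 e2). split; [apply Rmin_glb_lt; assumption|].
  intros y Hy. pose proof (Rmin_l e1 e2). pose proof (Rmin_r e1 e2).
  split; [apply HB1|apply HB2]; lra.
Qed.

Lemma preimage_open {X : Type} (d : X -> X -> R) (g : X -> X) (U : X -> Prop) :
  continuous_map d g -> open_set d U -> open_set d (fun y => U (g y)).
Proof.
  intros Hg HU x Hx. destruct (HU _ Hx) as [e [He HB]].
  destruct (Hg x e He) as [delta [Hdelta Hcont]].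
  exists delta. split; [exact Hdelta|]. intros y Hy. apply HB, Hcont, Hy.
Qed.

Lemma iter_continuous {X : Type} (d : X -> X -> R) (f : X -> X) (n : nat) :
  continuous_map d f -> continuous_map d (Nat.iter n f).
Proof.
  intros Hf. induction n as [|n IH]; intros x eps Heps.
  - exists eps. simpl. auto.
  - destruct (Hf (Nat.iter n f x) eps Heps) as [d1 [Hd1 Hcont1]].
    destruct (IH x d1 Hd1) as [d2 [Hd2 Hcont2]].
    exists d2. split; [exact Hd2|]. intros y Hy. simpl. apply Hcont1, Hcont2, Hy.
Qed.

Section MetricSpace.
Context {X : Type} (d : X -> X -> R).
Hypothesis metric : is_metric d.

Lemma dist_refl (x : X) : d x x = 0%R.
Proof. destruct metric as [_ [Hid _]]. apply Hid. reflexivity. Qed.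

Lemma ball_open (c : X) (r : R) : open_set d (ball d c r).
Proof.
  destruct metric as [_ [_ [_ Htri]]]. intros y Hy.
  exists (r - d c y)%R. split; [unfold ball in Hy; lra|].
  intros z Hz. unfold ball. specialize (Htri c y z). lra.
Qed.

Lemma ball_center (c : X) (r : R) : (0 < r)%R -> ball d c r c.
Proof. unfold ball. rewrite dist_refl. auto. Qed.

Lemma closed_ball_compl_open (c : X) (r : R) :
  open_set d (fun y => ~ closed_ball d c r y).
Proof.
  destruct metric as [_ [_ [Hsym Htri]]]. intros y Hy.
  unfold closed_ball in Hy. apply Rnot_le_lt in Hy.
  exists (d c y - r)%R. split; [lra|]. intros z Hz Hcz.
  unfold closed_ball in Hcz. specialize (Htri c z y). rewrite (Hsym z y) in Htri. lra.
Qed.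

Lemma open_contains_closed_ball (U : X -> Prop) (y : X) :
  open_set d U -> U y -> exists r, (0 < r)%R /\ forall z, closed_ball d y r z -> U z.
Proof.
  intros HU Hy. destruct (HU y Hy) as [e [He HB]].
  exists (e / 2)%R. split; [lra|]. intros z Hz. apply HB. unfold closed_ball in Hz. lra.
Qed.

Section Compact.
Hypothesis compact : compact_space d.

Lemma nested_closed_inter (K : nat -> X -> Prop) :
  (forall j, open_set d (fun y => ~ K j y)) -> (forall j, nonempty (K j)) ->
  (forall j y, K (S j) y -> K j y) -> exists x, forall j, K j x.
Proof.
  intros Hclosed Hne Hdecr.
  assert (Hmono : forall i j y, i <= j -> K j y -> K i y).
  { intros i j y Hij. induction Hij; auto. }
  apply NNPP. intro Hempty.
  destruct (compact nat (fun j y => ~ K j y) Hclosed) as [l Hl].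
  { intro y. apply NNPP. intro Hy. apply Hempty. exists y. intro j.
    apply NNPP. intro Hj. apply Hy. exists j. exact Hj. }
  destruct (Hne (list_max l)) as [y Hy].
  destruct (Hl y) as [i [Hin Hi]]. apply Hi. apply (Hmono i (list_max l)); [|exact Hy].
  assert (Hall : Forall (fun k => k <= list_max l) l) by (apply list_max_le; lia).
  rewrite Forall_forall in Hall. apply Hall, Hin.
Qed.

Lemma finite_net (r : R) :
  (0 < r)%R -> exists l : list X, forall y, exists c, In c l /\ ball d c r y.
Proof.
  intro Hr. destruct (compact X (fun c => ball d c r)) as [l Hl].
  - intro c. apply ball_open.
  - intro y. exists y. apply ball_center, Hr.
  - exists l. exact Hl.
Qed.

Lemma countable_ball_base :
  inhabited X ->
  exists (cen : nat -> X) (rad : nat -> R), (forall j, (0 < rad j)%R) /\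
    forall U, open_set d U -> nonempty U ->
      exists j, forall z, ball d (cen j) (rad j) z -> U z.
Proof.
  intros [x0]. destruct metric as [_ [_ [Hsym Htri]]].
  assert (Hpos : forall k, (0 < / INR (S k))%R)
    by (intro; apply Rinv_0_lt_compat, lt_0_INR; lia).
  destruct (choice _ (fun k => finite_net _ (Hpos k))) as [L HL].
  exists (fun j => nth (snd (of_nat j)) (L (fst (of_nat j))) x0),
         (fun j => / INR (S (fst (of_nat j))))%R.
  split; [intro; apply Hpos|].
  intros U HU [y Hy]. destruct (HU y Hy) as [e [He HB]].
  destruct (archimed_cor1 (e / 2) ltac:(lra)) as [N [HN HN0]].
  destruct (HL N y) as [c [Hc Hcy]]. destruct (In_nth _ _ x0 Hc) as [i [_ Hi]].
  exists (to_nat (N, i)). rewrite cancel_of_to. cbn [fst snd]. rewrite Hi.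
  intros z Hz. apply HB. unfold ball in Hcy, Hz.
  assert (/ INR (S N) < / INR N)%R.
  { apply Rinv_lt_contravar.
    - apply Rmult_lt_0_compat; apply lt_0_INR; lia.
    - rewrite S_INR; lra. }
  specialize (Htri y c z). rewrite (Hsym y c) in Htri. lra.
Qed.

Section Dynamics.
Variable f : X -> X.
Hypothesis f_cont : continuous_map d f.
Hypothesis f_trans : topologically_transitive d f.

Lemma closed_ball_returning_into (W V : X -> Prop) :
  open_set d W -> open_set d V -> nonempty W -> nonempty V ->
  exists z r n, (0 < r)%R /\ 1 <= n /\
    forall y, closed_ball d z r y -> W y /\ V (Nat.iter n f y).
Proof.
  intros HW HV HWne HVne.
  destruct (f_trans W V HW HV HWne HVne) as [n [Hn [z [HzW HzV]]]].
  assert (Hopen : open_set d (fun y => W y /\ V (Nat.iter n f y))).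
  { apply inter_open; [exact HW|]. apply preimage_open; [|exact HV].
    apply iter_continuous, f_cont. }
  destruct (open_contains_closed_ball _ z Hopen (conj HzW HzV)) as [r [Hr Hsub]].
  exists z, r, n. auto.
Qed.

Lemma transitive_point_exists : inhabited X -> exists x, transitive_point d f x.
Proof.
  intros [x0].
  destruct (countable_ball_base (inhabits x0)) as [cen [rad [Hrad Hbase]]].
  destruct (dependent_choice_seq (fun p : X * R => (0 < snd p)%R)
     (fun j p q => forall y, closed_ball d (fst q) (snd q) y ->
        ball d (fst p) (snd p) y /\
        exists n, 1 <= n /\ ball d (cen j) (rad j) (Nat.iter n f y))
     (x0, 1%R)) as [s Hs].
  { simpl. lra. }
  { intros j [z r] Hr. simpl in Hr.
    destruct (closed_ball_returning_into (ball d z r) (ball d (cen j) (rad j)))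
      as [z' [r' [n [Hr' [Hn Hsub]]]]];
      try apply ball_open; try (eexists; apply ball_center; auto).
    exists (z', r'). simpl. split; [exact Hr'|].
    intros y Hy. destruct (Hsub y Hy). split; [assumption|]. exists n. auto. }
  destruct (nested_closed_inter (fun j => closed_ball d (fst (s j)) (snd (s j))))
    as [x Hx].
  - intro j. apply closed_ball_compl_open.
  - intro j. exists (fst (s j)). unfold closed_ball. rewrite dist_refl.
    apply Rlt_le, Hs.
  - intros j y Hy. apply Rlt_le, (proj2 (Hs j) y Hy).
  - exists x. intros U HU HUne. destruct (Hbase U HU HUne) as [j Hj].
    destruct (proj2 (proj2 (Hs j) x (Hx (S j)))) as [n [Hn Hball]].
    exists n. split; [exact Hn|]. apply Hj, Hball.
Qed.

End Dynamics.
End Compact.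
End MetricSpace.

Lemma diffset_subN (A : nat -> Prop) : subN (diffset A).
Proof. intros [a [b [_ [_ [Hba H0]]]]]. lia. Qed.

Lemma hit_xU_subN {X : Type} (f : X -> X) (x : X) (U : X -> Prop) : subN (hit_xU f x U).
Proof. intros [H _]. lia. Qed.

Lemma diffset_unbounded (A : nat -> Prop) : infinite_set (diffset A) -> infinite_set A.
Proof.
  intros H m. destruct (H m) as [n [Hn [a [b [Ha [_ [_ Hab]]]]]]].
  exists a. split; [lia|exact Ha].
Qed.

Lemma shifted_diffset_sub_hit_UV {X : Type} (f : X -> X) (x : X) (U V : X -> Prop)
  (k n : nat) :
  shift (diffset (hit_xU f x (fun y => U y /\ V (Nat.iter k f y)))) k n ->
  hit_UV f U V n.
Proof.
  intros [p [[a [b [[_ [_ HaV]] [[_ [HbU _]] [Hba Hp]]]]] Hn]]. subst n p.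
  split; [lia|]. exists (Nat.iter b f x). split; [exact HbU|].
  rewrite <- Nat.iter_add. replace (a - b + k + b) with (k + a) by lia.
  rewrite Nat.iter_add. exact HaV.
Qed.

Lemma hit_UU_sub_diffset {X : Type} (d : X -> X -> R) (f : X -> X) (x : X)
  (U : X -> Prop) (k : nat) :
  continuous_map d f -> transitive_point d f x -> open_set d U ->
  hit_UV f U U k -> diffset (hit_xU f x U) k.
Proof.
  intros Hf Hx HU [Hk [y [HyU HkyU]]].
  destruct (Hx (fun w => U w /\ U (Nat.iter k f w))) as [n [Hn [HnU HnkU]]].
  { apply inter_open; [exact HU|]. apply preimage_open; [|exact HU].
    apply iter_continuous, Hf. }
  { exists y. auto. }
  exists (k + n), n. split.
  - split; [lia|]. rewrite Nat.iter_add. exact HnkU.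
  - repeat split; auto; lia.
Qed.

(* Sets of Fam are infinite, hence nonempty, so Fam-transitivity is transitivity. *)
Lemma F_transitive_topologically_transitive {X : Type} (d : X -> X -> R) (f : X -> X)
  (Fam : (nat -> Prop) -> Prop) :
  sub_Finf Fam -> F_transitive d f Fam -> topologically_transitive d f.
Proof.
  intros Hinf Ht U V HU HV HUne HVne.
  destruct (Hinf _ (Ht U V HU HV HUne HVne) 0) as [n [_ Hn]]. exists n. exact Hn.
Qed.

Lemma point_transitive_of_F_transitive {X : Type} (d : X -> X -> R) (f : X -> X)
  (Fam : (nat -> Prop) -> Prop) :
  inhabited X -> is_metric d -> compact_space d -> continuous_map d f ->
  furstenberg_family Fam -> sub_Finf Fam ->
  F_transitive d f Fam -> F_point_transitive d f (nabla Fam).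
Proof.
  intros Hinh Hm Hc Hf [_ Hup] Hinf Ht.
  destruct (transitive_point_exists d Hm Hc f Hf
              (F_transitive_topologically_transitive d f Fam Hinf Ht) Hinh) as [x Hx].
  exists x. intros U HU HUne. split; [apply hit_xU_subN|].
  apply (Hup _ _ (Ht U U HU HU HUne HUne) (diffset_subN _)).
  intros k Hk. exact (hit_UU_sub_diffset d f x U k Hf Hx HU Hk).
Qed.

Lemma F_transitive_of_point_transitive {X : Type} (d : X -> X -> R) (f : X -> X)
  (Fam : (nat -> Prop) -> Prop) :
  continuous_map d f -> furstenberg_family Fam -> translation_invariant Fam ->
  sub_Finf Fam -> F_point_transitive d f (nabla Fam) -> F_transitive d f Fam.
Proof.
  intros Hf [_ Hup] Htr Hinf [x Hx] U V HU HV HUne HVne.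
  destruct (diffset_unbounded _ (Hinf _ (proj2 (Hx U HU HUne))) 0)
    as [a [_ [_ Ha]]].
  destruct (diffset_unbounded _ (Hinf _ (proj2 (Hx V HV HVne))) (S a))
    as [a' [Haa' [_ Ha']]].
  set (k := a' - a).
  assert (HW : open_set d (fun y => U y /\ V (Nat.iter k f y))).
  { apply inter_open; [exact HU|]. apply preimage_open; [|exact HV].
    apply iter_continuous, Hf. }
  assert (HWne : nonempty (fun y => U y /\ V (Nat.iter k f y))).
  { exists (Nat.iter a f x). split; [exact Ha|].
    rewrite <- Nat.iter_add. replace (k + a) with a' by lia. exact Ha'. }
  apply (Hup _ _ (Htr _ k (proj2 (Hx _ HW HWne)))).
  - intros [H _]. lia.
  - apply shifted_diffset_sub_hit_UV.
Qed.

Theorem proposition3p6 (X : Type) (d : X -> X -> R) (f : X -> X)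
  (Fam : (nat -> Prop) -> Prop) :
  inhabited X -> is_metric d -> compact_space d -> continuous_map d f ->
  furstenberg_family Fam -> proper_family Fam -> translation_invariant Fam ->
  sub_Finf Fam ->
  (F_transitive d f Fam <-> F_point_transitive d f (nabla Fam)).
Proof.
  intros Hinh Hm Hc Hf HFam _ Htr Hinf. split.
  - apply point_transitive_of_F_transitive; assumption.
  - apply F_transitive_of_point_transitive; assumption.
Qed.
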